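(* Consider the MT-model on $\mathbb{T}_d$, $d\ge2$, and let $N$ be the number of neighbours of the root that are ever informed (the number of spreaders generated by the initial spreader). Then $$\mathbb{P}(N=i)=i!\binom{d+1}{i}\frac{i}{(d+1)^{i+1}},\qquad i\in\{1,\dots,d+1\},$$ and $N\in\{1,\dots,d+1\}$ almost surely.
   Context: Let $d\ge 2$ and let $\mathbb{T}_d$ be the infinite tree in which every vertex has degree $d+1$, with root $\mathbf 0$. The MT-model on $\mathbb{T}_d$ is the continuous-time Markov process $(\eta_t)_{t\ge0}$ on $\{-1,0,1\}^{\mathbb{T}_d}$ ($-1$ = ignorant, $0$ = spreader, $1$ = stifler) in which a vertex in state $-1$ jumps to $0$ at rate equal to its number of neighbours in state $0$, and a vertex in state $0$ jumps to $1$ at rate equal to its number of neighbours in states $\{0,1\}$ (equivalently, each spreader contacts each neighbour at rate 1, informing ignorants and becoming a stifler upon contacting a non-ignorant). Initially $\eta_0(\mathbf 0)=0$ and all other vertices are in state $-1$. *)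

From HB Require Import structures.
From mathcomp Require Import all_boot all_order all_algebra.
From mathcomp Require Import all_classical all_reals all_analysis.
Set Implicit Arguments. Unset Strict Implicit. Unset Printing Implicit Defensive.
Import Order.TTheory GRing.Theory Num.Theory.
Local Open Scope ring_scope.

(* Vertices of T_d: words over nat.  The root is [::]; its d+1 children are
   [:: a] (a < d+1); every other vertex v has parent (drop last) and d
   children rcons v b (b < d).  So every vertex has degree d+1. *)
Definition vertex := seq nat.
Definition root : vertex := [::].

Definition neighbours (d : nat) (v : vertex) : seq vertex :=
  if v is [::] then [seq [:: a] | a <- iota 0 d.+1]
  else take (size v).-1 v :: [seq rcons v b | b <- iota 0 d].

(* A configuration: st = state (-1 ignorant, 0 spreader, 1 stifler);
   supp = list of the (finitely many) non-ignorant vertices. *)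
Record config := Config { st : vertex -> int; supp : seq vertex }.

Definition init_config : config :=
  Config (fun v => if v == root then 0 else -1) [:: root].

Definition update (f : vertex -> int) (x : vertex) (a : int) : vertex -> int :=
  fun y => if y == x then a else f y.

Definition spreaders (c : config) : seq vertex := [seq u <- supp c | st c u == 0].

(* all (spreader, neighbour) directed contacts; each occurs at rate 1 *)
Definition contacts (d : nat) (c : config) : seq (vertex * vertex) :=
  [seq (u, v) | u <- spreaders c, v <- neighbours d u].

Definition contact (c : config) (uv : vertex * vertex) : config :=
  let: (u, v) := uv in
  if st c v == -1 then Config (update (st c) v 0) (v :: supp c)
  else Config (update (st c) u 1) (supp c).

(* Embedded jump chain of the MT-model: from c, each contact is chosen with
   probability 1 / (total rate) = 1 / size (contacts d c); configurations
   without spreaders are absorbing.  expect d n f c = E_c[ f(eta_n) ]. *)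
Fixpoint expect {R : realType} (d n : nat) (f : config -> R) (c : config) : R :=
  match n with
  | 0 => f c
  | n'.+1 =>
      let P := contacts d c in
      if P is [::] then f c
      else \sum_(p <- P) (size P)%:R^-1 * expect d n' f (contact c p)
  end.

Definition Nroot (d : nat) (c : config) : nat :=
  count (fun v => st c v != -1) (neighbours d root).

Definition probN (R : realType) (d n : nat) (A : pred nat) : R :=
  expect d n (fun c => if A (Nroot d c) then 1 else 0) init_config.

(* Only two features of a configuration matter for the root: whether it is
   still a spreader and the number N of its informed neighbours.  Contacts made
   by other spreaders never change this pair, because the only ignorant
   neighbours of a spreader other than the root are its own children; a contact
   made by the root informs a fresh neighbour with probability (d+1-N)/(d+1) and
   otherwise stops the root.  Hence a function of the pair with the mean-value
   property along the root's contacts has constant expectation along the jump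
   chain, and the limit of P(N_n = i) is the value of such a function at the
   initial configuration.  The error at time n is bounded by the expectation
   of 2^(d+1-N) [root spreads], which each step multiplies by at most
   1 - 1/(2s) when at most s vertices are informed; as s grows by at most one
   per step, the product of these factors is O(n^(-1/2)). *)

From Pilot Require Import Defs.
From HB Require Import structures.
From mathcomp Require Import all_boot all_order all_algebra.
From mathcomp Require Import all_classical all_reals all_analysis.
From mathcomp Require Import ring lra.
Import Order.TTheory GRing.Theory Num.Theory.
Import numFieldNormedType.Exports.
Set Implicit Arguments. Unset Strict Implicit.
Local Open Scope classical_set_scope.
Local Open Scope ring_scope.

Local Notation root := Defs.root.

Lemma count_predU1 (T : eqType) (a : pred T) (x : T) (s : seq T) :
  uniq s -> ~~ a x -> count (predU1 x a) s = (count a s + (x \in s))%N.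
Proof.
move=> us ax; rewrite -(count_uniq_mem x us) -count_predUI.
rewrite [count (predI _ _) _](@eq_count _ _ pred0) ?count_pred0 ?addn0.
  by apply: eq_count => y /=; rewrite orbC.
by move=> y /=; case: eqVneq => [->|]; rewrite ?(negbTE ax) ?andbF.
Qed.

Lemma sumr_const_in (V : nmodType) (T : eqType) (s : seq T) (F : T -> V) (x : V) :
  {in s, forall i, F i = x} -> \sum_(i <- s) F i = x *+ size s.
Proof. by move=> Fx; rewrite (eq_big_seq _ Fx) big_const_seq count_predT iter_addr_0. Qed.

Section Tree.
Variable d : nat.

Definition parent (v : vertex) : vertex := take (size v).-1 v.

Lemma size_neighbours v : size (neighbours d v) = d.+1.
Proof. by case: v => [|a v] /=; rewrite ?size_map size_iota. Qed.

Lemma uniq_neighbours_root : uniq (neighbours d root).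
Proof. by rewrite map_inj_uniq ?iota_uniq // => a b [->]. Qed.

Lemma parent_neighbours_root v : v \in neighbours d root -> parent v = root.
Proof. by move=> /mapP [a _ ->]. Qed.

Lemma root_notin_neighbours_root : root \notin neighbours d root.
Proof. by apply/negP => /mapP [a]. Qed.

Lemma neighboursP u v : v \in neighbours d u ->
  (u != root /\ v = parent u) \/ parent v = u.
Proof.
case: u => [|a u]; first by right; exact: parent_neighbours_root.
rewrite inE => /orP [/eqP ->|/mapP [b _ ->]]; first by left.
by right; rewrite /parent size_rcons -cats1 take_size_cat.
Qed.

End Tree.

Section Invariant.
Variable d : nat.
Implicit Types (c : config) (u v : vertex).

(* An invariant of the reachable configurations; the root stops spreading only
   by contacting an informed neighbour, whence the last clause. *)
Definition wf_config c : Prop :=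
  [/\ uniq (supp c), {in supp c, forall v, st c v != -1}, root \in supp c,
      (forall v, v != root -> st c v != -1 -> st c (parent v) != -1)
    & (st c root != 0 -> (0 < Nroot d c)%N)].

Lemma wf_init : wf_config init_config.
Proof. by split=> //= [v|v /negbTE ->]; rewrite ?inE => // /eqP ->. Qed.

Lemma mem_spreaders c u : (u \in spreaders c) = (u \in supp c) && (st c u == 0).
Proof. by rewrite mem_filter andbC. Qed.

Lemma Nroot_le c : (Nroot d c <= d.+1)%N.
Proof. by rewrite -(size_neighbours d root) count_size. Qed.

Lemma Nroot_init : Nroot d init_config = 0%N.
Proof.
rewrite /Nroot (@eq_in_count _ _ pred0) ?count_pred0 // => v vr /=.
by rewrite ifN_eq ?eqxx //; apply: contraTneq vr => ->; exact: root_notin_neighbours_root.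
Qed.

Lemma ignorant_neighbour_parent c u v : wf_config c -> u \in spreaders c ->
  v \in neighbours d u -> st c v = -1 -> parent v = u.
Proof.
case=> _ _ _ wf_parent _; rewrite mem_spreaders => /andP [_ /eqP stu] /neighboursP.
case=> // -[ur ->]; have := wf_parent u ur; rewrite stu => /(_ isT) /negP.
by move=> nv /eqP.
Qed.

Lemma informed_update (f : vertex -> int) x a w : a != -1 ->
  (update f x a w != -1) = (w == x) || (f w != -1).
Proof. by rewrite /update; case: (w =P x). Qed.

Lemma informed_stifle c u w : st c u = 0 -> (update (st c) u 1 w != -1) = (st c w != -1).
Proof. by move=> stu; rewrite informed_update //; case: (w =P u) => // ->; rewrite stu. Qed.

Lemma Nroot_inform c v s : st c v = -1 ->
  Nroot d (Config (update (st c) v 0) s) = (Nroot d c + (v \in neighbours d root))%N.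
Proof.
move=> stv; rewrite /Nroot -count_predU1 ?stv //; last exact: uniq_neighbours_root.
by apply: eq_count => y /=; rewrite informed_update.
Qed.

Lemma Nroot_stifle c u s : st c u = 0 -> Nroot d (Config (update (st c) u 1) s) = Nroot d c.
Proof. by move=> stu; apply: eq_count => y /=; rewrite informed_stifle. Qed.

Lemma wf_contact c p : wf_config c -> p \in contacts d c -> wf_config (contact c p).
Proof.
move=> wfc /allpairsPdep [u [v [us vu ->]]].
have [uniq_supp supp_informed root_supp wf_parent wf_root] := wfc.
move: (us); rewrite mem_spreaders => /andP [_ /eqP stu].
rewrite /contact; case: eqP => [stv|/eqP stv].
  have vNsupp : v \notin supp c by apply/negP => /supp_informed; rewrite stv eqxx.
  have rv : (root == v) = false by apply: contraNF vNsupp => /eqP <-.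
  split=> /=.
  - by rewrite vNsupp.
  - move=> w; rewrite inE informed_update //.
    by case/orP=> [-> //|/supp_informed ->]; rewrite orbT.
  - by rewrite inE root_supp orbT.
  - move=> w wr; rewrite !informed_update //.
    case/orP=> [/eqP ->|/(wf_parent w wr) ->]; last by rewrite orbT.
    by rewrite (ignorant_neighbour_parent wfc us vu stv) stu orbT.
  - by rewrite Nroot_inform // /update rv => /wf_root /leq_trans; apply; rewrite leq_addr.
split=> //=.
- by move=> w; rewrite informed_stifle //; apply: supp_informed.
- by move=> w wr; rewrite !informed_stifle //; apply: wf_parent.
- rewrite Nroot_stifle // /update; case: (root =P u) => [ru _|_ /wf_root //].
  by rewrite /Nroot -has_count; apply/hasP; exists v; rewrite // ru.
Qed.

End Invariant.

Section Observables.
Variables (R : realType) (d : nat).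
Implicit Types (Phi : bool -> nat -> R) (c : config) (u v : vertex).

Definition obs Phi c : R := Phi (st c root == 0) (Nroot d c).

Definition root_contact_sum Phi (N : nat) : R :=
  (d.+1 - N)%:R * Phi true N.+1 + N%:R * Phi false N.

Lemma obs_contact_nonroot Phi c u v : wf_config d c -> u \in spreaders c ->
  u != root -> v \in neighbours d u -> obs Phi (contact c (u, v)) = obs Phi c.
Proof.
move=> wfc us ur vu; have [_ supp_informed root_supp _ _] := wfc.
rewrite /contact /obs; case: (st c v =P -1) => [stv|_] /=.
  have vr : (root == v) = false.
    apply/negbTE; apply: contraTneq (supp_informed _ root_supp) => ->.
    by rewrite stv negbK.
  have vNr : v \notin neighbours d root.
    apply: contra ur => /parent_neighbours_root.
    by rewrite (ignorant_neighbour_parent wfc us vu stv) => ->.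
  by rewrite Nroot_inform // /update vr (negbTE vNr) addn0.
move: us; rewrite mem_spreaders => /andP [_ /eqP stu].
by rewrite Nroot_stifle // /update (ifN_eqC _ _ ur).
Qed.

Lemma obs_contact_root Phi c v : st c root = 0 -> v \in neighbours d root ->
  obs Phi (contact c (root, v)) =
  if st c v == -1 then Phi true (Nroot d c).+1 else Phi false (Nroot d c).
Proof.
move=> str vr; rewrite /contact /obs; case: (st c v =P -1) => [stv|_] /=.
  have rv : (root == v) = false.
    by apply: contraTF vr => /eqP <-; exact: root_notin_neighbours_root.
  by rewrite Nroot_inform // vr addn1 /update rv str.
by rewrite Nroot_stifle // /update eqxx.
Qed.

Lemma count_ignorant_neighbours_root c :
  count (fun v => st c v == -1) (neighbours d root) = (d.+1 - Nroot d c)%N.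
Proof.
rewrite -(size_neighbours d root) -(count_predC (fun v => st c v != -1)) addKn.
by apply: eq_count => v /=; rewrite negbK.
Qed.

Lemma sum_root_contacts Phi c : st c root = 0 ->
  \sum_(v <- neighbours d root) obs Phi (contact c (root, v)) =
  root_contact_sum Phi (Nroot d c).
Proof.
move=> str; rewrite (eq_big_seq _ (fun v => obs_contact_root Phi str)).
rewrite (bigID (fun v => st c v == -1)) [X in X + _ = _]/=.
rewrite [X in X + _](eq_bigr (fun=> Phi true (Nroot d c).+1)) => [|v ->] //.
rewrite [X in _ + X](eq_bigr (fun=> Phi false (Nroot d c))) => [|v /negbTE ->] //.
rewrite !big_const_seq !iter_addr_0 count_ignorant_neighbours_root.
by rewrite /root_contact_sum !mulr_natl.
Qed.

Lemma size_contacts c : size (contacts d c) = (d.+1 * size (spreaders c))%N.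
Proof.
rewrite /contacts; elim: (spreaders c) => [|u s IH] /=; first by rewrite muln0.
by rewrite size_cat size_map size_neighbours IH mulnS.
Qed.

Lemma contacts_nil_root c : wf_config d c -> contacts d c = [::] -> st c root != 0.
Proof.
case=> _ _ root_supp _ _ /(congr1 size); rewrite size_contacts => /eqP.
rewrite muln_eq0 /= size_eq0 => /eqP spr0; apply/eqP => str.
by move: (mem_spreaders c root); rewrite spr0 root_supp str eqxx.
Qed.

Lemma sum_contacts_obs Phi c : wf_config d c ->
  \sum_(p <- contacts d c) obs Phi (contact c p) =
  (size (contacts d c))%:R * obs Phi c
  + (st c root == 0)%:R *
    (root_contact_sum Phi (Nroot d c) - (d.+1)%:R * Phi true (Nroot d c)).
Proof.
move=> wfc; have [uniq_supp _ root_supp _ _] := wfc.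
have uniq_spr : uniq (spreaders c) := filter_uniq _ uniq_supp.
have sum_nonroot u : u \in spreaders c -> u != root ->
    \sum_(v <- neighbours d u) obs Phi (contact c (u, v)) = obs Phi c *+ d.+1.
  move=> us ur; rewrite -(size_neighbours d u).
  by apply: sumr_const_in => v; apply: obs_contact_nonroot.
rewrite size_contacts /contacts big_allpairs_dep.
case: (st c root =P 0) => [str|strN].
  have root_spr : root \in spreaders c by rewrite mem_spreaders root_supp str eqxx.
  rewrite (perm_big _ (perm_to_rem root_spr)) big_cons sum_root_contacts //.
  rewrite (@sumr_const_in _ _ _ _ (obs Phi c *+ d.+1)); last first.
    by move=> u; rewrite mem_rem_uniq // => /andP [ur us]; exact: sum_nonroot.
  have -> : size (spreaders c) = (size (rem root (spreaders c))).+1.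
    by rewrite size_rem // prednK // -has_predT; apply/hasP; exists root.
  rewrite /obs str eqxx /=; ring.
rewrite (@sumr_const_in _ _ _ _ (obs Phi c *+ d.+1)); last first.
  move=> u us; apply: sum_nonroot => //; apply/eqP => ur; apply: strN.
  by move: us; rewrite ur mem_spreaders => /andP [_ /eqP].
rewrite /=; ring.
Qed.

Lemma expect_succ n (f : config -> R) c : contacts d c != [::] ->
  expect d n.+1 f c =
  (size (contacts d c))%:R^-1 * \sum_(p <- contacts d c) expect d n f (contact c p).
Proof. by rewrite /=; case: (contacts d c) => // p P _; rewrite big_distrr. Qed.

Lemma expect_obs_harmonic Phi :
  (forall N, (N <= d.+1)%N -> root_contact_sum Phi N = (d.+1)%:R * Phi true N) ->
  forall n c, wf_config d c -> expect d n (obs Phi) c = obs Phi c.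
Proof.
move=> harm; elim=> // n IH c wfc.
have [E|P0] := eqVneq (contacts d c) [::]; first by rewrite /= E.
rewrite expect_succ // (eq_big_seq _ (fun p pc => IH _ (wf_contact wfc pc))).
rewrite sum_contacts_obs // harm ?Nroot_le // subrr mulr0 addr0 mulKf //.
by rewrite pnatr_eq0 size_eq0.
Qed.

Lemma expect_dist_le (f g h : config -> R) :
  (forall c, wf_config d c -> `|f c - g c| <= h c) ->
  forall n c, wf_config d c -> `|expect d n f c - expect d n g c| <= expect d n h c.
Proof.
move=> fgh; elim=> [|n IH] c wfc; first exact: fgh.
have [E|P0] := eqVneq (contacts d c) [::]; first by rewrite /= E; exact: fgh.
rewrite !expect_succ // -mulrBr -sumrB normrM ger0_norm ?invr_ge0 //.
rewrite ler_wpM2l ?invr_ge0 //; apply: le_trans (ler_norm_sum _ _ _) _.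
by rewrite !big_seq; apply: ler_sum => p pc; exact: IH (wf_contact wfc pc).
Qed.

End Observables.

Section Decay.
Variable R : realType.

Fixpoint decay (s n : nat) : R :=
  if n is n'.+1 then (1 - (2 * s%:R)^-1) * decay s.+1 n' else 1.

Lemma decay_factor_ge0 s : (0 < s)%N -> 0 <= 1 - (2 * s%:R : R)^-1.
Proof.
move=> s0; have s1 : 1 <= s%:R :> R by rewrite ler1n.
by rewrite subr_ge0 invf_le1; lra.
Qed.

Lemma decay_ge0 n s : (0 < s)%N -> 0 <= decay s n.
Proof.
elim: n s => [|n IH] s s0 //=.
by rewrite mulr_ge0 ?decay_factor_ge0 ?IH.
Qed.

(* (1 - 1/(2t))^2 <= t/(t+1) reduces to t + 1 <= 4t. *)
Lemma sqr_decay_factor_le (t : R) : 1 <= t -> (1 - (2 * t)^-1) ^+ 2 * (t + 1) <= t.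
Proof.
move=> t1; set y := (2 * t)^-1.
have ty : y * (2 * t) = 1 by rewrite mulVf //; lra.
have y0 : 0 < y by rewrite invr_gt0; lra.
nra.
Qed.

Lemma decay_sqr_le n s : (0 < s)%N -> decay s n ^+ 2 <= s%:R / (s + n)%:R.
Proof.
elim: n s => [|n IH] s s0 /=; first by rewrite expr1n addn0 divff // pnatr_eq0 -lt0n.
have s1 : 1 <= s%:R :> R by rewrite ler1n.
rewrite exprMn -addSnnS; apply: le_trans (ler_wpM2l (sqr_ge0 _) (IH s.+1 isT)) _.
rewrite mulrA ler_pM2r ?invr_gt0 ?ltr0n ?addn_gt0 //.
by rewrite -[s.+1%:R]natr1; exact: sqr_decay_factor_le.
Qed.

Lemma cvg_decay : decay 1 n @[n --> \oo] --> 0.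
Proof.
apply: (@squeeze_cvgr _ _ _ _ (cst 0) (fun n => Num.sqrt (n.+1%:R^-1))); last 2 first.
- exact: cvg_cst.
- by rewrite -sqrtr0; apply: continuous_cvg cvg_harmonic; exact: sqrt_continuous.
apply: nearW => n; have decay0 := @decay_ge0 n 1 isT.
rewrite decay0 /= -(ger0_norm decay0) -sqrtr_sqr ler_wsqrtr //.
by apply: le_trans (@decay_sqr_le n 1 isT) _; rewrite add1n mul1r.
Qed.

End Decay.

Section Lyapunov.
Variables (R : realType) (d : nat).
Implicit Types (K : R) (c : config).

Definition lyap K (b : bool) (N : nat) : R := if b then K / 2 ^+ N else 0.

Lemma root_contact_sum_lyap K N : 0 <= K ->
  root_contact_sum d (lyap K) N <= (d.+1)%:R * (lyap K true N / 2).
Proof.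
move=> K0; rewrite /root_contact_sum /lyap mulr0 addr0.
have -> : K / 2 ^+ N.+1 = K / 2 ^+ N / 2 by rewrite exprSr invfM mulrA.
by apply: ler_wpM2r; rewrite ?ler_nat ?leq_subr // !divr_ge0 ?exprn_ge0.
Qed.

Lemma mean_lyap_contact_le K c s : 0 <= K -> wf_config d c -> contacts d c != [::] ->
  (size (spreaders c) <= s)%N ->
  (size (contacts d c))%:R^-1 * \sum_(p <- contacts d c) obs d (lyap K) (contact c p)
  <= obs d (lyap K) c * (1 - (2 * s%:R)^-1).
Proof.
move=> K0 wfc P0 Ss; rewrite sum_contacts_obs // size_contacts natrM.
have S0 : (0 < size (spreaders c))%N.
  by move: P0; rewrite -size_eq0 size_contacts muln_eq0 lt0n => /norP [].
have := root_contact_sum_lyap (Nroot d c) K0.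
rewrite /obs; case: (st c root == 0) => /= [hT|_]; last first.
  by rewrite !(mulr0, mul0r, addr0).
set x := K / _; set D := d.+1%:R; set S := (size (spreaders c))%:R.
have x0 : 0 <= x by rewrite divr_ge0 ?exprn_ge0.
have D0 : 0 < D by rewrite ltr0n.
have S0' : 0 < S by rewrite ltr0n.
have Ss' : S / s%:R <= 1 by rewrite ler_pdivrMr ?mul1r ?ler_nat // ltr0n (leq_trans S0).
have := ler_wpM2l (mulr_ge0 (ltW D0) x0) Ss'; rewrite mulr1 => DxS.
rewrite mul1r ler_pdivrMl ?mulr_gt0 //.
have -> : D * S * (x * (1 - (2 * s%:R)^-1)) = D * S * x - D * x * (S / s%:R) / 2.
  by rewrite invfM; ring.
rewrite mulrA in hT; move: hT DxS; set T := root_contact_sum _ _ _.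
set A := D * S * x; set B := D * x * _; set Dx := D * x.
lra.
Qed.

Lemma size_supp_contact c p : (size (supp (contact c p)) <= (size (supp c)).+1)%N.
Proof. by case: p => u v; rewrite /contact; case: ifP. Qed.

Lemma expect_lyap_le K n : 0 <= K -> forall c s, wf_config d c -> (0 < s)%N ->
  (size (supp c) <= s)%N -> expect d n (obs d (lyap K)) c <= obs d (lyap K) c * decay R s n.
Proof.
move=> K0; elim: n => [|n IH] c s wfc s0 cs; first by rewrite /= mulr1.
have [E|P0] := eqVneq (contacts d c) [::].
  by rewrite /= E /obs (negbTE (contacts_nil_root wfc E)) /lyap mul0r.
rewrite expect_succ // [decay _ _ _]/= mulrA.
apply: le_trans (_ : (size (contacts d c))%:R^-1 *
    \sum_(p <- contacts d c) obs d (lyap K) (contact c p) * decay R s.+1 n <= _).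
  rewrite ler_wpM2l ?invr_ge0 // !big_seq; apply: ler_sum => p pc.
  by apply: IH; [exact: wf_contact | | exact: leq_trans (size_supp_contact c p) _].
rewrite -big_distrl mulrA ler_wpM2r ?decay_ge0 //.
by apply: mean_lyap_contact_le => //; rewrite size_filter (leq_trans (count_size _ _)).
Qed.

Lemma expect_cvg_obs (f : config -> R) (Phi : bool -> nat -> R) :
  (forall N, (N <= d.+1)%N -> root_contact_sum d Phi N = (d.+1)%:R * Phi true N) ->
  (forall c, wf_config d c -> `|f c - obs d Phi c| <= (st c root == 0)%:R) ->
  expect d n f init_config @[n --> \oo] --> obs d Phi init_config.
Proof.
move=> harm fPhi; set K : R := 2 ^+ d.+1.
have lyap_ge c : (st c root == 0)%:R <= obs d (lyap K) c.
  rewrite /obs /lyap; case: (st c root == 0) => //=.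
  by rewrite ler_pdivlMr ?exprn_gt0 // mul1r ler_weXn2l ?ler1n ?Nroot_le.
have bound n : `|obs d Phi init_config - expect d n f init_config| <= K * decay R 1 n.
  rewrite -(expect_obs_harmonic harm n (wf_init d)) distrC.
  have lyap_bound c (wfc : wf_config d c) := le_trans (fPhi c wfc) (lyap_ge c).
  apply: le_trans (expect_dist_le lyap_bound n (wf_init d)) _.
  have := @expect_lyap_le K n (exprn_ge0 _ (ler0n _ 2)) _ 1 (wf_init d) isT (leqnn 1).
  by rewrite /obs /= ?eqxx Nroot_init /lyap expr0 divr1.
have decayK : K * decay R 1 n @[n --> \oo] --> 0.
  by rewrite -(mulr0 K); apply: cvgMl_tmp; exact: cvg_decay.
apply/cvgrPdist_le => e e0; move/cvgr0_norm_le: decayK => /(_ e e0).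
apply: filterS => n Kn.
exact: le_trans (bound n) (le_trans (ler_norm _) Kn).
Qed.

End Lyapunov.

Lemma ffact_leq_expn n N m : (n <= N)%N -> (n ^_ m <= N ^ m)%N.
Proof.
elim: m n => [|m IH] n nN //; rewrite ffactnS expnS leq_mul //.
exact/IH/(leq_trans (leq_pred n)).
Qed.

Section FinalCount.
Variables (R : realType) (d i : nat).
Hypothesis i_le : (i <= d.+1)%N.

(* From [k] informed neighbours, the root must inform [i - k] fresh
   neighbours in a row and then contact an informed one. *)
Definition hit_prob (k : nat) : R :=
  if (k <= i)%N then ((d.+1 - k) ^_ (i - k))%:R * i%:R / (d.+1)%:R ^+ (i - k).+1
  else 0.

Definition final_count_obs (b : bool) (k : nat) : R :=
  if b then hit_prob k else (k == i)%:R.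

Lemma root_contact_sum_final_count N : (N <= d.+1)%N ->
  root_contact_sum d final_count_obs N = (d.+1)%:R * hit_prob N.
Proof.
move=> Nd; rewrite /root_contact_sum /final_count_obs /hit_prob.
case: (ltngtP N i) => Ni.
- have Nd' : (N <= d)%N by rewrite -ltnS (leq_trans Ni).
  rewrite -(subnSK Ni) (subSn Nd') subSS ffactSS natrM [in RHS]exprS /=.
  by field; rewrite expf_neq0 // addrC natr1 pnatr_eq0.
- by rewrite /=; ring.
- by rewrite -Ni subnn ffactn0 expr1 /=; field.
Qed.

Lemma hit_prob_ge0 k : 0 <= hit_prob k.
Proof. by rewrite /hit_prob; case: ifP. Qed.

Lemma hit_prob_le1 k : hit_prob k <= 1.
Proof.
rewrite /hit_prob; case: ifP => // _.
rewrite ler_pdivrMr ?exprn_gt0 ?ltr0n // mul1r -natrM -natrX ler_nat expnSr.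
apply: leq_mul; last exact: leq_trans i_le _.
exact/ffact_leq_expn/leq_subr.
Qed.

Lemma hit_prob0 : hit_prob 0 = i`!%:R * 'C(d.+1, i)%:R * i%:R / (d.+1)%:R ^+ i.+1.
Proof. by rewrite /hit_prob leq0n !subn0 -bin_ffact natrM (mulrC 'C(_, _)%:R). Qed.

End FinalCount.

Theorem lemma1 (R : realType) (d : nat) : (2 <= d)%N ->
  (forall i : nat, (1 <= i <= d.+1)%N ->
     (fun n => probN R d n (pred1 i)) @ \oo -->
       (i`!%:R * 'C(d.+1, i)%:R * i%:R / (d.+1)%:R ^+ i.+1 : R))
  /\ (fun n => probN R d n (fun k => (1 <= k <= d.+1)%N)) @ \oo --> (1 : R).
Proof.
move=> _ ; split.
  move=> i /andP [_ i_le]; rewrite -hit_prob0.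
  have -> : hit_prob R d i 0 = obs d (final_count_obs R d i) init_config.
    by rewrite /obs /= ?eqxx Nroot_init.
  apply: expect_cvg_obs => [N|c _]; first exact: root_contact_sum_final_count.
  rewrite /obs /final_count_obs; case: (st c root == 0) => /=; last first.
    by case: (Nroot d c == i); rewrite subrr normr0.
  have := hit_prob_ge0 R d i (Nroot d c); have := hit_prob_le1 R i_le (Nroot d c).
  by case: (Nroot d c == i) => /= h1 h0; rewrite ler_norml; apply/andP; split; lra.
have -> : (1 : R) = obs d (fun _ _ => 1) init_config by [].
apply: expect_cvg_obs => [N Nd|c [_ _ _ _ wf_root]].
  by rewrite /root_contact_sum !mulr1 -natrD subnK.
rewrite /obs; case: (st c root =P 0) => [_|/eqP/wf_root N0]; last first.
  by rewrite N0 Nroot_le subrr normr0.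
by case: (_ && _); rewrite ?subrr ?normr0 ?sub0r ?normrN ?normr1.
Qed.
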